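(* Let $k\ge 0$ be an integer and let $\mathcal{H}$ be a family of $n$ half-circles in the circle $\mathbb{S}^1$ with $n > 3k$. Then $\mathcal{H}$ contains at most $k+1$ different $k$-cliques.
   Context: A half-circle of $\mathbb{S}^1$ is an arc of $\mathbb{S}^1$ consisting of half of the circle (a semicircle). A subset $J$ of $k$ half-circles from $\mathcal{H}$ is a $k$-clique if there is a point $p\in\mathbb{S}^1$ that lies in all half-circles of $J$ but in no half-circle of $\mathcal{H}\setminus J$. *)

From HB Require Import structures.
From mathcomp Require Import all_boot all_order all_algebra.
From mathcomp Require Import reals.
Set Implicit Arguments. Unset Strict Implicit. Unset Printing Implicit Defensive.
Import Order.TTheory GRing.Theory Num.Theory.
Local Open Scope ring_scope.

Definition on_circle (R : realType) (p : R * R) : bool :=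
  p.1 ^+ 2 + p.2 ^+ 2 == 1.

(* The (closed) half-circle of S^1 with midpoint c (c on S^1):
   the points p of S^1 with <p, c> >= 0, i.e. the arc of angular
   length pi centered at c. *)
Definition in_half_circle (R : realType) (c p : R * R) : bool :=
  on_circle p && (0 <= c.1 * p.1 + c.2 * p.2).

Definition half_circle_family (R : realType) (n : nat) (H : 'I_n -> R * R) : Prop :=
  forall i, on_circle (H i).

Definition is_clique (R : realType) (n : nat) (H : 'I_n -> R * R)
    (k : nat) (J : {set 'I_n}) : Prop :=
  #|J| = k /\
  exists p : R * R, on_circle p /\
    forall i : 'I_n, in_half_circle (H i) p = (i \in J).

From HB Require Import structures.
From mathcomp Require Import all_boot all_order all_algebra.
From mathcomp Require Import reals.
From mathcomp Require Import ring lra.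
Set Implicit Arguments. Unset Strict Implicit. Unset Printing Implicit Defensive.
Import Order.TTheory GRing.Theory Num.Theory.

(* Choose a witness point w J on the circle for every clique J.  Three cliques
   cover at most 3k < n indices, so some half-circle misses all three witnesses:
   any three witnesses lie in a common open half-circle.  Hence the orientation
   [0 < det (w J) (w J')] is a strict total order on the cliques; let q be its
   least element.  Sweeping counterclockwise from w q, a clique J loses more and
   more elements of q and gains more and more elements outside q; as all cliques
   have size k, J is determined by |q \ J| in [0, k]. *)

Section LeastElement.

Variables (T : eqType) (r : rel T) (s : seq T).
Hypothesis r_trans : {in s & &, transitive r}.
Hypothesis r_total : {in s &, forall x y, x != y -> r x y || r y x}.

Lemma exists_least : s != [::] -> exists2 m, m \in s & {in s, forall x, x != m -> r m x}.
Proof.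
move=> s_neq0; pose le x y := (x == y) || r x y.
have le_total : {in s &, total le}.
  move=> x y xs ys; rewrite /le (eq_sym y); case: eqP => //= /eqP; exact: r_total.
have le_trans : {in s & &, transitive le}.
  move=> y x z ys xs zs /orP[/eqP-> //|xy] /orP[/eqP<-|yz]; rewrite /le ?xy ?orbT //.
  by rewrite (r_trans ys xs zs xy yz) orbT.
have := sort_sorted_in le_total (allss s); have := mem_sort le s; have := size_sort le s.
case: (sort le s) => [/esym/eqP|m t _ mem_st]; first by rewrite size_eq0 (negbTE s_neq0).
have s_st : all (mem s) (m :: t) by apply/allP => x; rewrite mem_st.
move=> /(order_path_min_in le_trans s_st) /allP le_mt.
exists m; first by rewrite -mem_st mem_head.
move=> x; rewrite -mem_st inE => /orP[/eqP-> |xt]; first by rewrite eqxx.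
by move=> /negbTE xm; have := le_mt x xt; rewrite /le eq_sym xm.
Qed.

End LeastElement.

Lemma exists_notin3 (T : finType) (A B C : {set T}) :
  (#|A| + #|B| + #|C| < #|T|)%N -> exists x, [/\ x \notin A, x \notin B & x \notin C].
Proof.
move=> card_lt; have : (0 < #|~: (A :|: B :|: C)|)%N.
  rewrite -(ltn_add2l #|A :|: B :|: C|) addn0 cardsC (leq_ltn_trans _ card_lt) //.
  by rewrite (leq_trans (leq_card_setU _ _)) // leq_add2r leq_card_setU.
by case/card_gt0P => x; rewrite !inE !negb_or => /andP[/andP[]]; exists x.
Qed.

Section Sweep.

Variables (T : finType) (q : {set T}).

Definition sweep_le (A B : {set T}) := (q :\: A \subset q :\: B) && (A :\: q \subset B :\: q).

Lemma sweep_le_base (A : {set T}) : sweep_le q A.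
Proof. by rewrite /sweep_le setDv !sub0set. Qed.

Lemma sweep_le_inj (A B : {set T}) :
  #|A| = #|B| -> sweep_le A B -> #|q :\: A| = #|q :\: B| -> A = B.
Proof.
move=> cardAB /andP[qA_qB Aq_Bq] card_qAB.
have qA_eq : q :\: A = q :\: B by apply/eqP; rewrite eqEcard qA_qB card_qAB leqnn.
have AB : A \subset B.
  apply/subsetP => x xA; have [xq|xNq] := boolP (x \in q).
    by move/setP/(_ x): qA_eq; rewrite !inE xA xq /= andbT => /esym/negbFE.
  by move/subsetP/(_ x): Aq_Bq; rewrite !inE xA xNq; apply.
by apply/eqP; rewrite eqEcard AB cardAB leqnn.
Qed.

Lemma size_sweep_chain (s : seq {set T}) :
  uniq s -> {in s &, forall A B : {set T}, #|A| = #|B|} ->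
  {in s &, forall A B, sweep_le A B || sweep_le B A} -> (size s <= #|q|.+1)%N.
Proof.
move=> uniq_s card_s chain_s.
pose width A := #|q :\: A|.
have width_inj : {in s &, injective width}.
  move=> A B As Bs; have /orP[AB|BA] := chain_s A B As Bs.
    exact: sweep_le_inj (card_s A B As Bs) AB.
  by move=> /esym /(sweep_le_inj (card_s B A Bs As) BA).
rewrite -(size_map width) -(size_iota 0 #|q|.+1) uniq_leq_size ?map_inj_in_uniq //.
by move=> _ /mapP[A _ ->]; rewrite mem_iota ltnS subset_leq_card ?subsetDl.
Qed.

End Sweep.

Local Open Scope ring_scope.

Section PlaneVectors.

Variable R : comPzRingType.
Implicit Types a b c d p : R * R.

Definition dotp c p := c.1 * p.1 + c.2 * p.2.
Definition detp a b := a.1 * b.2 - a.2 * b.1.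

Lemma detpC a b : detp b a = - detp a b.
Proof. by rewrite /detp; ring. Qed.

(* Cramer's rule [detp a b *: p = detp p b *: a + detp a p *: b], dotted with c. *)
Lemma dotp_cramer c a b p : detp a b * dotp c p = detp p b * dotp c a + detp a p * dotp c b.
Proof. by rewrite /detp /dotp; ring. Qed.

End PlaneVectors.

Section OpenHalfPlane.

Variable R : realDomainType.
Implicit Types a b c d p : R * R.

Lemma detp_trans d a b c :
  dotp d a < 0 -> dotp d b < 0 -> dotp d c < 0 ->
  0 < detp a b -> 0 < detp b c -> 0 < detp a c.
Proof.
move=> da db dc ab bc; rewrite -(nmulr_llt0 _ db) dotp_cramer.
by rewrite -[0]addr0 ltrD // pmulr_rlt0.
Qed.

Lemma cone_dotp_ge0 c a b p : 0 < detp a b -> 0 <= detp p b -> 0 <= detp a p ->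
  0 <= dotp c a -> 0 <= dotp c b -> 0 <= dotp c p.
Proof.
move=> ab pb ap ca cb; rewrite -(pmulr_rge0 _ ab) dotp_cramer.
by rewrite addr_ge0 // mulr_ge0.
Qed.

Lemma cone_dotp_lt0 c a b p : 0 < detp a b -> 0 <= detp p b -> 0 < detp a p ->
  dotp c a < 0 -> dotp c b < 0 -> dotp c p < 0.
Proof.
move=> ab pb ap ca cb; rewrite -(pmulr_rlt0 _ ab) dotp_cramer.
by rewrite -[0]addr0 ler_ltD ?pmulr_rlt0 // mulr_ge0_le0 // ltW.
Qed.

End OpenHalfPlane.

Lemma detp_eq0_on_circle (R : realType) (d p q : R * R) :
  on_circle p -> on_circle q -> dotp d p < 0 -> dotp d q < 0 -> detp p q = 0 -> p = q.
Proof.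
case: p q => [p1 p2] [q1 q2]; rewrite /on_circle /dotp /detp /=.
move=> /eqP p_unit /eqP q_unit dp dq pq; set t := p1 * q1 + p2 * q2.
have q1E : q1 = t * p1.
  have : q1 * (p1 ^+ 2 + p2 ^+ 2) = t * p1 - p2 * (p1 * q2 - p2 * q1) by rewrite /t; ring.
  by rewrite p_unit pq mulr1 mulr0 subr0.
have q2E : q2 = t * p2.
  have : q2 * (p1 ^+ 2 + p2 ^+ 2) = t * p2 + p1 * (p1 * q2 - p2 * q1) by rewrite /t; ring.
  by rewrite p_unit pq mulr1 mulr0 addr0.
have t_gt0 : 0 < t.
  by rewrite -(nmulr_llt0 _ dp); move: dq; rewrite q1E q2E; congr (_ < 0); ring.
have t_sq : t ^+ 2 = 1.
  by rewrite -q_unit q1E q2E -[t ^+ 2]mulr1 -p_unit; ring.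
have t1 : t = 1 by nra.
by rewrite q1E q2E t1 !mul1r.
Qed.

Section CliqueWitnesses.

Variables (R : realType) (n k : nat) (H : 'I_n -> R * R).
Variables (s : seq {set 'I_n}) (w : {set 'I_n} -> R * R).
Hypothesis n_gt3k : (3 * k < n)%N.
Hypothesis card_s : {in s, forall J : {set 'I_n}, #|J| = k}.
Hypothesis w_on_circle : {in s, forall J, on_circle (w J)}.
Hypothesis mem_w : {in s, forall (J : {set 'I_n}) i, (i \in J) = (0 <= dotp (H i) (w J))}.

Lemma exists_half_circle_missing3 J1 J2 J3 : J1 \in s -> J2 \in s -> J3 \in s ->
  exists i, [/\ dotp (H i) (w J1) < 0, dotp (H i) (w J2) < 0 & dotp (H i) (w J3) < 0].
Proof.
move=> J1s J2s J3s; have [|i [iJ1 iJ2 iJ3]] := @exists_notin3 _ J1 J2 J3.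
  by rewrite card_ord !card_s // -addnA addnn -mul2n -mulSn.
by exists i; rewrite !ltNge -!mem_w.
Qed.

Definition ccw J J' := 0 < detp (w J) (w J').

Lemma ccw_trans : {in s & &, transitive ccw}.
Proof.
move=> J2 J1 J3 J2s J1s J3s; have [i [iJ1 iJ2 iJ3]] := exists_half_circle_missing3 J1s J2s J3s.
exact: detp_trans iJ1 iJ2 iJ3.
Qed.

Lemma w_inj : {in s &, injective w}.
Proof. by move=> J J' Js J's wJJ'; apply/setP => i; rewrite !mem_w // wJJ'. Qed.

Lemma ccw_total : {in s &, forall J J', J != J' -> ccw J J' || ccw J' J}.
Proof.
move=> J J' Js J's; apply: contraR.
rewrite negb_or /ccw (detpC (w J)) oppr_gt0 -!leNgt => /andP[le0 ge0].
have [i [iJ iJ' _]] := exists_half_circle_missing3 Js J's Js.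
apply/eqP/w_inj => //.
apply: detp_eq0_on_circle (w_on_circle Js) (w_on_circle J's) iJ iJ' _.
exact/le_anti/andP.
Qed.

Lemma ccw_sweep_le q J J' : q \in s -> J \in s -> J' \in s ->
  ccw q J -> ccw q J' -> 0 <= detp (w J) (w J') -> sweep_le q J J'.
Proof.
move=> qs Js J's qJ qJ' JJ'; apply/andP; split; apply/subsetP => i;
  rewrite !inE !mem_w //.
- case/andP=> iJ iq; rewrite iq andbT; apply: contra iJ.
  exact: cone_dotp_ge0 qJ' JJ' (ltW qJ) iq.
- case/andP=> iq iJ; rewrite iq /=; apply: contraTT iJ; rewrite -!ltNge in iq *.
  exact: cone_dotp_lt0 qJ' JJ' qJ iq.
Qed.

Lemma size_cliques_le : uniq s -> (size s <= k.+1)%N.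
Proof.
move=> uniq_s; have [-> //|s_neq0] := eqVneq s [::].
have [q qs q_least] := exists_least ccw_trans ccw_total s_neq0.
rewrite -(card_s qs); apply: size_sweep_chain => // [J J' Js J's|J J' Js J's].
  by rewrite !card_s.
have [->|Jq] := eqVneq J q; first by rewrite sweep_le_base.
have [->|J'q] := eqVneq J' q; first by rewrite sweep_le_base orbT.
apply/orP; have [JJ'|J'J] := lerP 0 (detp (w J) (w J')).
  by left; apply: ccw_sweep_le; rewrite ?q_least.
by right; apply: ccw_sweep_le; rewrite ?q_least // detpC oppr_ge0 ltW.
Qed.

End CliqueWitnesses.

Theorem lemma3 (R : realType) (k n : nat) (H : 'I_n -> R * R) :
  half_circle_family H -> (3 * k < n)%N ->
  forall s : seq {set 'I_n}, uniq s ->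
    (forall J, J \in s -> is_clique H k J) ->
    (size s <= k.+1)%N.
Proof.
(* The midpoints need not be unit vectors: only the sign of [dotp (H i) p] matters. *)
move=> _ n_gt3k s uniq_s cliques_s.
have /fin_all_exists[w w_witness] : forall J : {set 'I_n}, exists p : R * R,
    J \in s -> on_circle p /\ forall i, in_half_circle (H i) p = (i \in J).
  move=> J; have [/cliques_s[_ [p p_witness]]|_] := boolP (J \in s).
    by exists p.
  by exists 0.
apply: (size_cliques_le n_gt3k _ _ _ uniq_s) => J /[dup] /w_witness[w_circ w_mem] Js.
- by case: (cliques_s J Js).
- exact: w_circ.
- by move=> i; rewrite -w_mem /in_half_circle w_circ.
Qed.
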